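(* Let $k$ be a positive integer and $f$ a function. Let $G_1,\dots,G_p$ be graphs such that each $G_i$ has $n_i$ vertices, contains at most $f(k)\cdot n_i^2$ cliques, and contains no clique of size $k$. Let $G$ be an $n$-vertex graph obtained by $(\le k)$-sums of $G_1,\dots,G_p$. Then for some function $f'$ depending on $f$ and $k$, $G$ contains at most $f'(k)\cdot n^2$ cliques.
   Context: Graphs are simple, finite and undirected. A clique is a set of pairwise adjacent vertices (the empty set and single vertices count). $k$-sum: let $G_1,G_2$ be graphs with disjoint vertex sets and, for $i=1,2$, let $W_i\subseteq V(G_i)$ be a clique of size $k$ in $G_i$. Let $G_i'$ be obtained from $G_i$ by deleting some (possibly no) edges with both endpoints in $W_i$. For a bijection $\phi:W_1\to W_2$, a $k$-sum of $G_1$ and $G_2$ is the graph obtained from the union of $G_1'$ and $G_2'$ by identifying $w$ with $\phi(w)$ for all $w\in W_1$. A $(\le k)$-sum is a $k'$-sum for some $k'\le k$. A graph is obtained by $(\le k)$-sums of $G_1,\dots,G_p$ if it arises from these graphs by repeatedly taking $(\le k)$-sums of graphs already obtained (each $G_i$ being used once), i.e. via a binary tree whose leaves are $G_1,\dots,G_p$ and each internal node is a $(\le k)$-sum of its two children. *)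

From mathcomp Require Import all_boot.
Set Implicit Arguments. Unset Strict Implicit. Unset Printing Implicit Defensive.

Record sgraph := SGraph {
  vert : finType;
  adj : rel vert;
  adj_sym : symmetric adj;
  adj_irr : irreflexive adj }.

(* Cliques (the empty set and singletons count). *)
Definition is_clique (G : sgraph) (Q : {set vert G}) : bool :=
  [forall x in Q, forall y in Q, (x != y) ==> adj x y].

Definition num_cliques (G : sgraph) : nat := #|[set Q : {set vert G} | is_clique Q]|.

Definition has_clique_of_size (G : sgraph) (k : nat) : Prop :=
  exists Q : {set vert G}, is_clique Q /\ #|Q| = k.

(* G is a (<= k)-sum of H1 and H2: i1, i2 embed the vertex sets of H1, H2
   into V(G), covering V(G); they overlap exactly on the identified cliques
   W1 (in H1) and W2 (in H2) of common size <= k (the bijection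
   phi : W1 -> W2 is a <-> i2^-1 (i1 a)); e1, e2 are H1, H2 with some edges
   inside W1, W2 deleted; and E(G) is the union of the images of e1 and e2. *)
Definition overlap (A B C : finType) (i1 : A -> C) (i2 : B -> C) : {set A} :=
  [set a | i1 a \in codom i2].

Definition is_sum (k : nat) (H1 H2 G : sgraph) : Prop :=
  exists (i1 : vert H1 -> vert G) (i2 : vert H2 -> vert G)
         (e1 : rel (vert H1)) (e2 : rel (vert H2)),
  [/\ injective i1 /\ injective i2,
      (forall v, (v \in codom i1) || (v \in codom i2)),
      #|overlap i1 i2| <= k /\
      is_clique (overlap i1 i2) /\ is_clique (overlap i2 i1),
      (symmetric e1 /\
       (forall a b, e1 a b -> adj a b) /\
       (forall a b, ~~ ((a \in overlap i1 i2) && (b \in overlap i1 i2)) ->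
                    e1 a b = adj a b)) /\
      (symmetric e2 /\
       (forall a b, e2 a b -> adj a b) /\
       (forall a b, ~~ ((a \in overlap i2 i1) && (b \in overlap i2 i1)) ->
                    e2 a b = adj a b)) &
      (forall u v, adj u v =
         [exists a, exists b, [&& i1 a == u, i1 b == v & e1 a b]] ||
         [exists a, exists b, [&& i2 a == u, i2 b == v & e2 a b]])].

(* G is obtained by (<= k)-sums of the graphs Gs i, i in A, each used once,
   along a binary tree (up to isomorphism). *)
Inductive obtained (k p : nat) (Gs : 'I_p -> sgraph) : {set 'I_p} -> sgraph -> Prop :=
| ob_leaf (i : 'I_p) (G : sgraph) (phi : vert (Gs i) -> vert G) :
    bijective phi -> (forall a b, adj (phi a) (phi b) = adj a b) ->
    obtained k Gs [set i] G
| ob_node (A1 A2 : {set 'I_p}) (G1 G2 G : sgraph) :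
    [disjoint A1 & A2] -> obtained k Gs A1 G1 -> obtained k Gs A2 G2 ->
    is_sum k G1 G2 G -> obtained k Gs (A1 :|: A2) G.

(* Induction along the tree of sums, with the constant C = 2^(2k) + f(k).
   Every clique of a (<= k)-sum lies on one side (an edge between the two
   private parts would belong to neither summand), and its preimage there is
   still a clique (the only deleted edges join overlap vertices, and the
   overlap is itself a clique).  Hence cliques(G) <= cliques(H1) + cliques(H2),
   while |H1| + |H2| <= |G| + k.  If both sides are proper, the smaller one
   either has more than 2k vertices, and then a^2 + b^2 <= n^2, or has at most
   2k vertices and hence at most 2^(2k) cliques, absorbed by n^2 - a^2 >= 1.
   If one side has all |G| vertices, every clique of G already lives there. *)

From mathcomp Require Import all_boot.
From mathcomp Require Import zify.

Set Implicit Arguments.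
Unset Strict Implicit.
Unset Printing Implicit Defensive.

Lemma is_cliqueP (G : sgraph) (Q : {set vert G}) :
  reflect {in Q &, forall x y, x != y -> adj x y} (is_clique Q).
Proof.
apply: (iffP forall_inP) => [hQ x y hx hy | hQ x hx].
  by move/forall_inP: (hQ x hx) => /(_ y hy) /implyP.
by apply/forall_inP => y hy; apply/implyP; apply: hQ.
Qed.

Lemma num_cliques_le_exp (G : sgraph) : num_cliques G <= 2 ^ #|vert G|.
Proof.
rewrite /num_cliques -cardsT -card_powerset.
by apply/subset_leq_card/subsetP => Q _; rewrite inE subsetT.
Qed.

Section CliquesThroughMap.

Variables (G H : sgraph) (i : vert H -> vert G).
Hypothesis preim_clique : forall Q, is_clique Q -> is_clique (i @^-1: Q).

Lemma card_cliques_in_codom_le :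
  #|[set Q : {set vert G} | is_clique Q & Q \subset codom i]| <= num_cliques H.
Proof.
set S := [set Q | _ & _].
have preim_inj : {in S &, injective (fun Q : {set vert G} => i @^-1: Q)}.
  move=> Q1 Q2; rewrite !inE => /andP [_ /subsetP s1] /andP [_ /subsetP s2] e.
  apply/setP => x; apply/idP/idP => hx.
  - have /codomP [a ex] := s1 x hx; subst x.
    have : a \in i @^-1: Q1 by rewrite inE.
    by rewrite e inE.
  - have /codomP [a ex] := s2 x hx; subst x.
    have : a \in i @^-1: Q2 by rewrite inE.
    by rewrite -e inE.
rewrite -(card_in_imset preim_inj); apply/subset_leq_card/subsetP => R.
by case/imsetP => Q; rewrite /S inE => /andP [/preim_clique hQ _] ->; rewrite inE.
Qed.

Lemma num_cliques_le_of_onto :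
  (forall v, v \in codom i) -> num_cliques G <= num_cliques H.
Proof.
move=> onto; apply: leq_trans card_cliques_in_codom_le.
apply/subset_leq_card/subsetP => Q; rewrite !inE => ->.
by apply/subsetP => v _; apply: onto.
Qed.

End CliquesThroughMap.

Lemma num_cliques_le_iso (H G : sgraph) (phi : vert H -> vert G) :
    bijective phi -> (forall a b, adj (phi a) (phi b) = adj a b) ->
  num_cliques G <= num_cliques H.
Proof.
move=> [psi phiK psiK] adj_phi; apply: (num_cliques_le_of_onto (i:=phi)).
  move=> Q /is_cliqueP hQ; apply/is_cliqueP => a b; rewrite !inE => ha hb nab.
  by rewrite -adj_phi hQ // (inj_eq (can_inj phiK)).
by move=> v; rewrite -[v]psiK codom_f.
Qed.

(* [e] is a summand with some overlap edges deleted; the last hypothesis is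
   what the edge description of the sum says about that summand. *)
Lemma sum_side_preim_clique (G H : sgraph) (B : finType)
    (i : vert H -> vert G) (j : B -> vert G) (e : rel (vert H))
    (Q : {set vert G}) :
    injective i -> subrel e (@adj H) -> is_clique (overlap i j) ->
    (forall a b, adj (i a) (i b) -> e a b || (i a \in codom j) && (i b \in codom j)) ->
  is_clique Q -> is_clique (i @^-1: Q).
Proof.
move=> inj_i sub_e /is_cliqueP ov adj_i /is_cliqueP hQ.
apply/is_cliqueP => a b; rewrite !inE => ha hb nab.
have /adj_i /orP [/sub_e // | /andP [ja jb]] : adj (i a) (i b).
  by rewrite hQ // (inj_eq inj_i).
by rewrite ov // inE.
Qed.

Lemma sum_sq_bound c k n a b N1 N2 : 2 ^ (2 * k) <= c ->
    N1 <= c * a ^ 2 -> N2 <= c * b ^ 2 -> N2 <= 2 ^ b ->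
    a + b <= n + k -> b <= a < n ->
  N1 + N2 <= c * n ^ 2.
Proof.
move=> hc h1 h2 h2' hab /andP [ba an].
case: (leqP b (2 * k)) => hb.
- have N2c : N2 <= c := leq_trans h2' (leq_trans (leq_pexp2l (isT : 0 < 2) hb) hc).
  apply: leq_trans (leq_add h1 N2c) _.
  have sq : a ^ 2 + 1 <= n ^ 2 by nia.
  by rewrite -[c in _ + c]muln1 -mulnDr leq_mul2l sq orbT.
- apply: leq_trans (leq_add h1 h2) _.
  have sq : a ^ 2 + b ^ 2 <= n ^ 2 by nia.
  by rewrite -mulnDr leq_mul2l sq orbT.
Qed.

Section SumCliques.

Variables (k : nat) (H1 H2 G : sgraph).
Variables (i1 : vert H1 -> vert G) (i2 : vert H2 -> vert G).
Variables (e1 : rel (vert H1)) (e2 : rel (vert H2)).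
Hypotheses (inj_i1 : injective i1) (inj_i2 : injective i2).
Hypothesis cover : forall v, (v \in codom i1) || (v \in codom i2).
Hypothesis overlap_small : #|overlap i1 i2| <= k.
Hypotheses (ov1 : is_clique (overlap i1 i2)) (ov2 : is_clique (overlap i2 i1)).
Hypotheses (sub_e1 : subrel e1 (@adj H1)) (sub_e2 : subrel e2 (@adj H2)).
Hypothesis adjE : forall u v, adj u v =
  [exists a, exists b, [&& i1 a == u, i1 b == v & e1 a b]] ||
  [exists a, exists b, [&& i2 a == u, i2 b == v & e2 a b]].

Lemma adj_side1 a b :
  adj (i1 a) (i1 b) -> e1 a b || (i1 a \in codom i2) && (i1 b \in codom i2).
Proof.
rewrite adjE => /orP [] /existsP [a' /existsP [b' /and3P [/eqP ea /eqP eb e_ab]]].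
- by rewrite -(inj_i1 ea) -(inj_i1 eb) e_ab.
- by rewrite -ea -eb !codom_f orbT.
Qed.

Lemma adj_side2 a b :
  adj (i2 a) (i2 b) -> e2 a b || (i2 a \in codom i1) && (i2 b \in codom i1).
Proof.
rewrite adjE => /orP [] /existsP [a' /existsP [b' /and3P [/eqP ea /eqP eb e_ab]]].
- by rewrite -ea -eb !codom_f orbT.
- by rewrite -(inj_i2 ea) -(inj_i2 eb) e_ab.
Qed.

Lemma preim_clique1 Q : is_clique Q -> is_clique (i1 @^-1: Q).
Proof. exact: sum_side_preim_clique inj_i1 sub_e1 ov1 adj_side1. Qed.

Lemma preim_clique2 Q : is_clique Q -> is_clique (i2 @^-1: Q).
Proof. exact: sum_side_preim_clique inj_i2 sub_e2 ov2 adj_side2. Qed.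

Lemma clique_sub_codom Q :
  is_clique Q -> (Q \subset codom i1) || (Q \subset codom i2).
Proof.
move=> /is_cliqueP hQ; apply/contraT; rewrite negb_or.
case/andP => /subsetPn [u Qu u1] /subsetPn [v Qv v2].
have u2 : u \in codom i2 by move: (cover u); rewrite (negbTE u1).
have /hQ : u != v by apply: contraNneq v2 => <-.
rewrite adjE => /(_ Qu Qv) /orP [] /existsP [a /existsP [b /and3P [/eqP ea /eqP eb _]]].
- by move: u1; rewrite -ea codom_f.
- by move: v2; rewrite -eb codom_f.
Qed.

Lemma sum_card_le : #|vert H1| + #|vert H2| <= #|vert G| + k.
Proof.
set A1 := [set u | u \in codom i1]; set A2 := [set u | u \in codom i2].
have A12T : A1 :|: A2 = setT by apply/setP => u; rewrite !inE cover.
have A12k : #|A1 :&: A2| <= k.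
  have sub : A1 :&: A2 \subset i1 @: overlap i1 i2.
    by apply/subsetP => u; rewrite !inE => /andP [/codomP [a ->] h2];
      rewrite imset_f // inE.
  exact: leq_trans (subset_leq_card sub) (leq_trans (leq_imset_card _ _) overlap_small).
have cA1 : #|A1| = #|vert H1| by rewrite cardsE card_codom.
have cA2 : #|A2| = #|vert H2| by rewrite cardsE card_codom.
by rewrite -cA1 -cA2 -cardsUI A12T cardsT leq_add2l.
Qed.

Lemma num_cliques_sum_le : num_cliques G <= num_cliques H1 + num_cliques H2.
Proof.
apply: leq_trans (leq_add (card_cliques_in_codom_le preim_clique1)
                          (card_cliques_in_codom_le preim_clique2)).
apply: leq_trans (leq_card_setU _ _); apply/subset_leq_card/subsetP => Q.
by rewrite !inE => hQ; rewrite hQ clique_sub_codom.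
Qed.

Lemma num_cliques_sum_full1 : #|vert G| <= #|vert H1| -> num_cliques G <= num_cliques H1.
Proof. by move=> full; apply: num_cliques_le_of_onto preim_clique1 (inj_card_onto inj_i1 full). Qed.

Lemma num_cliques_sum_full2 : #|vert G| <= #|vert H2| -> num_cliques G <= num_cliques H2.
Proof. by move=> full; apply: num_cliques_le_of_onto preim_clique2 (inj_card_onto inj_i2 full). Qed.

Variable c : nat.
Hypothesis c_large : 2 ^ (2 * k) <= c.

Lemma num_cliques_sum_bound :
    num_cliques H1 <= c * #|vert H1| ^ 2 -> num_cliques H2 <= c * #|vert H2| ^ 2 ->
  num_cliques G <= c * #|vert G| ^ 2.
Proof.
move=> bound1 bound2.
have [full1|lt1] := leqP #|vert G| #|vert H1|.
  apply: leq_trans (num_cliques_sum_full1 full1) (leq_trans bound1 _).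
  by rewrite leq_mul2l leq_exp2r // (leq_card _ inj_i1) orbT.
have [full2|lt2] := leqP #|vert G| #|vert H2|.
  apply: leq_trans (num_cliques_sum_full2 full2) (leq_trans bound2 _).
  by rewrite leq_mul2l leq_exp2r // (leq_card _ inj_i2) orbT.
apply: leq_trans num_cliques_sum_le _.
have [le21|lt12] := leqP #|vert H2| #|vert H1|.
  by apply: sum_sq_bound c_large bound1 bound2 (num_cliques_le_exp _) sum_card_le _;
    rewrite le21 lt1.
rewrite addnC; apply: sum_sq_bound c_large bound2 bound1 (num_cliques_le_exp _) _ _.
  by rewrite addnC sum_card_le.
by rewrite (ltnW lt12) lt2.
Qed.

End SumCliques.

Lemma is_sum_num_cliques_bound c k (H1 H2 G : sgraph) :
    2 ^ (2 * k) <= c -> is_sum k H1 H2 G ->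
    num_cliques H1 <= c * #|vert H1| ^ 2 -> num_cliques H2 <= c * #|vert H2| ^ 2 ->
  num_cliques G <= c * #|vert G| ^ 2.
Proof.
move=> c_large [i1 [i2 [e1 [e2 [[inj1 inj2] cover [ovk [ov1 ov2]] sides adjE]]]]].
case: sides => [[_ [sub1 _]] [_ [sub2 _]]].
exact: (num_cliques_sum_bound inj1 inj2 cover ovk ov1 ov2 sub1 sub2 adjE c_large).
Qed.

Theorem lemma11 (k : nat) (f : nat -> nat) :
  0 < k ->
  exists C : nat,
    forall (p : nat) (Gs : 'I_p -> sgraph) (G : sgraph),
      (forall i, num_cliques (Gs i) <= f k * #|vert (Gs i)| ^ 2) ->
      (forall i, ~ has_clique_of_size (Gs i) k) ->
      obtained k Gs [set: 'I_p] G ->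
      num_cliques G <= C * #|vert G| ^ 2.
Proof.
move=> _; exists (2 ^ (2 * k) + f k) => p Gs G bound_Gs _.
elim=> {G} [i G phi bij_phi adj_phi | A1 A2 G1 G2 G _ _ IH1 _ IH2 sumG].
- apply: leq_trans (num_cliques_le_iso bij_phi adj_phi) (leq_trans (bound_Gs i) _).
  rewrite leq_mul ?leq_addl // leq_exp2r //.
  by case: bij_phi => psi phiK _; apply: leq_card (can_inj phiK).
- exact: is_sum_num_cliques_bound (leq_addr _ _) sumG IH1 IH2.
Qed.
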